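(* Let ${\mathbf{X}}\in\mathbb{R}_+^{m\times n}$, let ${\mathbf{A}}\in\mathbb{R}^{k\times m}$ satisfy ${\mathbf{A}}{\mathbf{A}}^T={\mathbf{I}}_k$, let $\lambda\in[0,1]$ and $\sigma\ge\max_{a,b}\big(({\mathbf{A}}^T{\mathbf{A}})_{ab}\big)_-$. Then for entrywise nonnegative ${\mathbf{U}}\in\mathbb{R}^{m\times r}$, ${\mathbf{V}}\in\mathbb{R}^{n\times r}$ (with denominators below entrywise positive), the objective $$\|{\mathbf{A}}({\mathbf{X}}-{\mathbf{U}}{\mathbf{V}}^T)\|_F^2+\lambda\|({\mathbf{I}}_m-{\mathbf{A}}^T{\mathbf{A}}){\mathbf{U}}{\mathbf{V}}^T\|_F^2+\sigma\|\mathbf{1}^T({\mathbf{X}}-{\mathbf{U}}{\mathbf{V}}^T)\|_2^2$$ does not increase under each of the updates $${\mathbf{U}}\leftarrow{\mathbf{U}}\circ\frac{{\mathbf{A}}^T{\mathbf{A}}{\mathbf{X}}{\mathbf{V}}+\sigma\mathbf{1}\mathbf{1}^T{\mathbf{X}}{\mathbf{V}}}{(1-\lambda){\mathbf{A}}^T{\mathbf{A}}{\mathbf{U}}{\mathbf{V}}^T{\mathbf{V}}+\sigma\mathbf{1}\mathbf{1}^T{\mathbf{U}}{\mathbf{V}}^T{\mathbf{V}}+\lambda{\mathbf{U}}{\mathbf{V}}^T{\mathbf{V}}},$$ $${\mathbf{V}}\leftarrow{\mathbf{V}}\circ\frac{{\mathbf{X}}^T{\mathbf{A}}^T{\mathbf{A}}{\mathbf{U}}+\sigma{\mathbf{X}}^T\mathbf{1}\mathbf{1}^T{\mathbf{U}}}{(1-\lambda){\mathbf{V}}{\mathbf{U}}^T{\mathbf{A}}^T{\mathbf{A}}{\mathbf{U}}+\sigma{\mathbf{V}}{\mathbf{U}}^T\mathbf{1}\mathbf{1}^T{\mathbf{U}}+\lambda{\mathbf{V}}{\mathbf{U}}^T{\mathbf{U}}},$$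 and the updated factors remain entrywise nonnegative.
   Context: $\mathbf{1}\in\mathbb{R}^m$ is the all-ones vector; $(x)_-=-\min(x,0)$; $\circ$ is entrywise product and the fraction bar is entrywise division; $\mathbb{R}_+^{m\times n}$ denotes entrywise nonnegative matrices. $\|\cdot\|_F$ is the Frobenius norm, $\|\cdot\|_2$ the Euclidean norm. *)

From mathcomp Require Import all_boot all_order all_algebra.
Set Implicit Arguments. Unset Strict Implicit. Unset Printing Implicit Defensive.
Import Order.TTheory GRing.Theory Num.Theory.
Local Open Scope ring_scope.

Definition negpart {R : realFieldType} (x : R) : R := - Num.min x 0.

Definition frob2 {R : realFieldType} {p q : nat} (M : 'M[R]_(p, q)) : R :=
  \sum_(i < p) \sum_(j < q) M i j ^+ 2.

Definition ones {R : realFieldType} (p : nat) : 'cV[R]_p := const_mx 1.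

Definition nonneg_mx {R : realFieldType} {p q : nat} (M : 'M[R]_(p, q)) : Prop :=
  forall i j, 0 <= M i j.
Definition pos_mx {R : realFieldType} {p q : nat} (M : 'M[R]_(p, q)) : Prop :=
  forall i j, 0 < M i j.

Definition hadamard {R : realFieldType} {p q : nat} (M N : 'M[R]_(p, q)) :=
  map2_mx (fun a b => a * b) M N.
Definition ediv {R : realFieldType} {p q : nat} (M N : 'M[R]_(p, q)) :=
  map2_mx (fun a b => a / b) M N.

Definition objective {R : realFieldType} {k m n r : nat} (A : 'M[R]_(k, m)) (X : 'M[R]_(m, n)) (lam sigma : R) (U : 'M[R]_(m, r)) (V : 'M[R]_(n, r)) : R :=
  frob2 (A *m (X - U *m V^T))
  + lam * frob2 ((1%:M - A^T *m A) *m (U *m V^T))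
  + sigma * frob2 ((ones m)^T *m (X - U *m V^T)).

Definition numU {R : realFieldType} {k m n r : nat} (A : 'M[R]_(k, m)) (X : 'M[R]_(m, n)) (lam sigma : R) (U : 'M[R]_(m, r)) (V : 'M[R]_(n, r)) : 'M[R]_(m, r) :=
  A^T *m A *m X *m V + sigma *: (ones m *m (ones m)^T *m X *m V).
Definition denU {R : realFieldType} {k m n r : nat} (A : 'M[R]_(k, m)) (X : 'M[R]_(m, n)) (lam sigma : R) (U : 'M[R]_(m, r)) (V : 'M[R]_(n, r)) : 'M[R]_(m, r) :=
  (1 - lam) *: (A^T *m A *m U *m V^T *m V)
  + sigma *: (ones m *m (ones m)^T *m U *m V^T *m V)
  + lam *: (U *m V^T *m V).
Definition updU {R : realFieldType} {k m n r : nat} (A : 'M[R]_(k, m)) (X : 'M[R]_(m, n)) (lam sigma : R) (U : 'M[R]_(m, r)) (V : 'M[R]_(n, r)) : 'M[R]_(m, r) :=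
  hadamard U (ediv (numU A X lam sigma U V) (denU A X lam sigma U V)).

Definition numV {R : realFieldType} {k m n r : nat} (A : 'M[R]_(k, m)) (X : 'M[R]_(m, n)) (lam sigma : R) (U : 'M[R]_(m, r)) (V : 'M[R]_(n, r)) : 'M[R]_(n, r) :=
  X^T *m A^T *m A *m U + sigma *: (X^T *m ones m *m (ones m)^T *m U).
Definition denV {R : realFieldType} {k m n r : nat} (A : 'M[R]_(k, m)) (X : 'M[R]_(m, n)) (lam sigma : R) (U : 'M[R]_(m, r)) (V : 'M[R]_(n, r)) : 'M[R]_(n, r) :=
  (1 - lam) *: (V *m U^T *m A^T *m A *m U)
  + sigma *: (V *m U^T *m ones m *m (ones m)^T *m U)
  + lam *: (V *m U^T *m U).
Definition updV {R : realFieldType} {k m n r : nat} (A : 'M[R]_(k, m)) (X : 'M[R]_(m, n)) (lam sigma : R) (U : 'M[R]_(m, r)) (V : 'M[R]_(n, r)) : 'M[R]_(n, r) :=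
  hadamard V (ediv (numV A X lam sigma U V) (denV A X lam sigma U V)).

From mathcomp Require Import all_boot all_order all_algebra ring lra.
Import Order.TTheory GRing.Theory Num.Theory.
Set Implicit Arguments. Unset Strict Implicit. Unset Printing Implicit Defensive.
Local Open Scope ring_scope.

(* Since A A^T = I, P := A^T A is an orthogonal projection, so the objective,
   seen as a function of W = U V^T, is the quadratic form
   F(W) = F(0) - 2 <W, C X> + <W, Q W> with C = P + sigma 1 1^T and
   Q = C + lam (I - P); the bound on sigma makes C and Q entrywise
   nonnegative.  With V fixed the objective is a quadratic in U with Hessian
   E |-> Q E V^T V, and the update is the Lee-Seung multiplicative step for
   such a quadratic: the auxiliary function obtained by replacing the Hessian
   term by its diagonal majorant sum_ia L_ia T_ia^2 (S L B)_ia is minimised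
   exactly by the update, which therefore does not increase the objective.
   The V update is the same argument applied to the transpose. *)

Section FrobeniusDot.
Variable R : realFieldType.

Definition frobdot {p q : nat} (M N : 'M[R]_(p, q)) : R := \tr (M *m N^T).

Lemma frobdotE p q (M N : 'M[R]_(p, q)) :
  frobdot M N = \sum_i \sum_j M i j * N i j.
Proof.
rewrite /frobdot /mxtrace; apply: eq_bigr => i _; rewrite !mxE.
by apply: eq_bigr => j _; rewrite mxE.
Qed.

Lemma frob2_dot p q (M : 'M[R]_(p, q)) : frob2 M = frobdot M M.
Proof.
by rewrite frobdotE /frob2; apply: eq_bigr => i _; apply: eq_bigr => j _.
Qed.

Lemma frobdotC p q (M N : 'M[R]_(p, q)) : frobdot M N = frobdot N M.
Proof. by rewrite !frobdotE; apply: eq_bigr => i _; apply: eq_bigr => j _; rewrite mulrC. Qed.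

Lemma frobdotDr p q (M N1 N2 : 'M[R]_(p, q)) :
  frobdot M (N1 + N2) = frobdot M N1 + frobdot M N2.
Proof. by rewrite /frobdot linearD /= mulmxDr mxtraceD. Qed.

Lemma frobdotZr p q (M N : 'M[R]_(p, q)) a : frobdot M (a *: N) = a * frobdot M N.
Proof. by rewrite /frobdot linearZ /= -scalemxAr mxtraceZ. Qed.

Lemma frobdotNr p q (M N : 'M[R]_(p, q)) : frobdot M (- N) = - frobdot M N.
Proof. by rewrite -scaleN1r frobdotZr mulN1r. Qed.

Lemma frobdotDl p q (M1 M2 N : 'M[R]_(p, q)) :
  frobdot (M1 + M2) N = frobdot M1 N + frobdot M2 N.
Proof. by rewrite frobdotC frobdotDr !(frobdotC N). Qed.

Lemma frobdotNl p q (M N : 'M[R]_(p, q)) : frobdot (- M) N = - frobdot M N.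
Proof. by rewrite frobdotC frobdotNr frobdotC. Qed.

Lemma frobdot_tr p q (M N : 'M[R]_(p, q)) : frobdot M^T N^T = frobdot M N.
Proof. by rewrite /frobdot -mxtrace_tr trmx_mul !trmxK mxtrace_mulC. Qed.

Lemma frobdot_mull p q s (G : 'M[R]_(s, p)) (Y : 'M[R]_(p, q)) (Z : 'M[R]_(s, q)) :
  frobdot (G *m Y) Z = frobdot Y (G^T *m Z).
Proof. by rewrite /frobdot trmx_mul trmxK mulmxA [RHS]mxtrace_mulC mulmxA. Qed.

Lemma frobdot_mulr p q s (H : 'M[R]_(q, s)) (Y : 'M[R]_(p, q)) (Z : 'M[R]_(p, s)) :
  frobdot (Y *m H) Z = frobdot Y (Z *m H^T).
Proof. by rewrite /frobdot trmx_mul trmxK mulmxA. Qed.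

Lemma frobdot_mul_tr p q s (U : 'M[R]_(p, s)) (E : 'M[R]_(q, s)) (M : 'M[R]_(p, q)) :
  frobdot (U *m E^T) M = frobdot E (M^T *m U).
Proof. by rewrite frobdot_mull -frobdot_tr trmx_mul !trmxK. Qed.

Lemma frob2_mull p q s (G : 'M[R]_(s, p)) (Y : 'M[R]_(p, q)) :
  frob2 (G *m Y) = frobdot Y (G^T *m G *m Y).
Proof. by rewrite frob2_dot frobdot_mull mulmxA. Qed.

Lemma frobdot_symC p q (S : 'M[R]_p) (Y Z : 'M[R]_(p, q)) :
  S^T = S -> frobdot Y (S *m Z) = frobdot Z (S *m Y).
Proof. by move=> hS; rewrite frobdotC frobdot_mull hS. Qed.

Lemma frobdot_quadD p q (S : 'M[R]_p) (Y Z : 'M[R]_(p, q)) : S^T = S ->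
  frobdot (Y + Z) (S *m (Y + Z))
  = frobdot Y (S *m Y) + 2 * frobdot Z (S *m Y) + frobdot Z (S *m Z).
Proof.
by move=> hS; rewrite mulmxDr frobdotDl !frobdotDr (frobdot_symC _ Z hS); ring.
Qed.

End FrobeniusDot.

Section NonnegMatrices.
Variable R : realFieldType.

Lemma nonneg_mx_mul p q s (M : 'M[R]_(p, q)) (N : 'M[R]_(q, s)) :
  nonneg_mx M -> nonneg_mx N -> nonneg_mx (M *m N).
Proof. by move=> hM hN i j; rewrite mxE; apply: sumr_ge0 => l _; apply: mulr_ge0. Qed.

Lemma nonneg_mx_tr p q (M : 'M[R]_(p, q)) : nonneg_mx M -> nonneg_mx M^T.
Proof. by move=> hM i j; rewrite mxE. Qed.

Lemma nonneg_mx1 p : nonneg_mx (1%:M : 'M[R]_p).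
Proof. by move=> i j; rewrite mxE ler0n. Qed.

Lemma nonneg_mx_hadamard_ediv p q (L N D : 'M[R]_(p, q)) :
  nonneg_mx L -> nonneg_mx N -> pos_mx D -> nonneg_mx (hadamard L (ediv N D)).
Proof.
move=> nL nN pD i j; rewrite !mxE.
by rewrite mulr_ge0 // divr_ge0 // ltW.
Qed.

End NonnegMatrices.

Section MultiplicativeUpdate.
Variables (R : realFieldType) (p r : nat) (S : 'M[R]_p) (B : 'M[R]_r).
Hypotheses (S_sym : S^T = S) (B_sym : B^T = B).
Hypotheses (S_ge0 : nonneg_mx S) (B_ge0 : nonneg_mx B).

Lemma sum4_swap (f : 'I_p -> 'I_r -> 'I_p -> 'I_r -> R) :
  \sum_i \sum_a \sum_j \sum_b f i a j b = \sum_j \sum_b \sum_i \sum_a f i a j b.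
Proof.
rewrite [LHS]pair_bigA [RHS]pair_bigA /=.
rewrite [LHS](eq_bigr (fun x => \sum_y f x.1 x.2 y.1 y.2)); last first.
  by move=> x _; rewrite pair_bigA.
rewrite [RHS](eq_bigr (fun y => \sum_x f x.1 x.2 y.1 y.2)); last first.
  by move=> x _; rewrite pair_bigA.
exact: exchange_big.
Qed.

Lemma mulmx3E (L : 'M[R]_(p, r)) i a :
  (S *m L *m B) i a = \sum_j \sum_b S i j * L j b * B b a.
Proof.
by rewrite mxE exchange_big /=; apply: eq_bigr => b _; rewrite mxE mulr_suml.
Qed.

(* Lee-Seung majorant: with w := S_ij B_ba L_ia L_jb >= 0 the difference of
   the two sides is (1/2) sum w (T_ia - T_jb)^2. *)
Lemma frobdot_hadamard_quad_le (L T : 'M[R]_(p, r)) : nonneg_mx L ->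
  frobdot (hadamard L T) (S *m hadamard L T *m B)
  <= \sum_i \sum_a L i a * T i a ^+ 2 * (S *m L *m B) i a.
Proof.
move=> L_ge0.
pose w i a j b := S i j * B b a * L i a * L j b.
have quadE : frobdot (hadamard L T) (S *m hadamard L T *m B) =
    \sum_i \sum_a \sum_j \sum_b w i a j b * (T i a * T j b).
  rewrite frobdotE; apply: eq_bigr => i _; apply: eq_bigr => a _.
  rewrite mulmx3E mulr_sumr; apply: eq_bigr => j _.
  rewrite mulr_sumr; apply: eq_bigr => b _; rewrite /w !mxE; ring.
have majE : \sum_i \sum_a L i a * T i a ^+ 2 * (S *m L *m B) i a =
    \sum_i \sum_a \sum_j \sum_b w i a j b * T i a ^+ 2.
  apply: eq_bigr => i _; apply: eq_bigr => a _.
  rewrite mulmx3E mulr_sumr; apply: eq_bigr => j _.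
  rewrite mulr_sumr; apply: eq_bigr => b _; rewrite /w; ring.
have maj_swap : \sum_i \sum_a \sum_j \sum_b w i a j b * T i a ^+ 2 =
    \sum_i \sum_a \sum_j \sum_b w i a j b * T j b ^+ 2.
  rewrite [RHS]sum4_swap; apply: eq_bigr => i _; apply: eq_bigr => a _.
  apply: eq_bigr => j _; apply: eq_bigr => b _.
  have Sji : S j i = S i j by rewrite -{1}S_sym mxE.
  have Bab : B b a = B a b by rewrite -{1}B_sym mxE.
  by rewrite /w Sji Bab; ring.
rewrite quadE majE.
have -> : \sum_i \sum_a \sum_j \sum_b w i a j b * T i a ^+ 2 =
    (\sum_i \sum_a \sum_j \sum_b w i a j b * T i a ^+ 2
     + \sum_i \sum_a \sum_j \sum_b w i a j b * T j b ^+ 2) / 2.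
  by rewrite -maj_swap; field.
rewrite ler_pdivlMr //.
rewrite mulr_suml -!big_split /=; apply: ler_sum => i _.
rewrite mulr_suml -!big_split /=; apply: ler_sum => a _.
rewrite mulr_suml -!big_split /=; apply: ler_sum => j _.
rewrite mulr_suml -!big_split /=; apply: ler_sum => b _.
have w_ge0 : 0 <= w i a j b by rewrite /w !mulr_ge0.
have : 0 <= w i a j b * (T i a - T j b) ^+ 2 by rewrite mulr_ge0 // sqr_ge0.
nra.
Qed.

Lemma mult_update_le (f : 'M[R]_(p, r) -> R) (L N D : 'M[R]_(p, r)) :
  D = S *m L *m B ->
  (forall E, f (L + E) = f L + 2 * frobdot E (S *m L *m B - N)
                         + frobdot E (S *m E *m B)) ->
  nonneg_mx L -> pos_mx D -> f (hadamard L (ediv N D)) <= f L.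
Proof.
move=> DE f_quad L_ge0 D_gt0; rewrite -DE in f_quad.
pose T : 'M[R]_(p, r) := \matrix_(i, a) (N i a / D i a - 1).
have -> : hadamard L (ediv N D) = L + hadamard L T.
  by apply/matrixP => i a; rewrite !mxE; ring.
rewrite f_quad -addrA gerDl.
apply: le_trans (lerD (lexx _) (frobdot_hadamard_quad_le T L_ge0)) _.
rewrite frobdotE -DE mulr_sumr -big_split /=; apply: sumr_le0 => i _.
rewrite mulr_sumr -big_split /=; apply: sumr_le0 => a _; rewrite !mxE.
have Dia_gt0 := D_gt0 i a.
set t := N i a / D i a - 1.
have -> : N i a = D i a * (t + 1) by rewrite /t; field; rewrite gt_eqF.
have : 0 <= L i a * t ^+ 2 * D i a.
  by apply: mulr_ge0; [apply: mulr_ge0; [exact: L_ge0 | exact: sqr_ge0] | exact: ltW].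
(* the update is the exact minimiser of the majorant: the sum collapses to
   minus the majorant's quadratic term *)
suff -> : 2 * (L i a * t * (D i a - D i a * (t + 1))) + L i a * t ^+ 2 * D i a
          = - (L i a * t ^+ 2 * D i a) by rewrite oppr_le0.
ring.
Qed.

End MultiplicativeUpdate.

Lemma negpart_ge0 (R : realFieldType) (x : R) : 0 <= negpart x.
Proof. by rewrite /negpart oppr_ge0 ge_min lexx orbT. Qed.

Lemma oppr_le_negpart (R : realFieldType) (x : R) : - x <= negpart x.
Proof. by rewrite /negpart lerN2 ge_min lexx. Qed.

Section Objective.
Variables (R : realFieldType) (k m n : nat) (A : 'M[R]_(k, m)) (X : 'M[R]_(m, n)).
Variables (lam sigma : R).

Definition P_A : 'M[R]_m := A^T *m A.
Definition J_m : 'M[R]_m := ones m *m (ones m)^T.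
Definition C_mx : 'M[R]_m := P_A + sigma *: J_m.
Definition Q_mx : 'M[R]_m := C_mx + lam *: (1%:M - P_A).

Definition objectiveW (W : 'M[R]_(m, n)) : R :=
  frob2 (A *m (X - W)) + lam * frob2 ((1%:M - A^T *m A) *m W)
  + sigma * frob2 ((ones m)^T *m (X - W)).

Lemma P_A_tr : P_A^T = P_A. Proof. by rewrite /P_A trmx_mul trmxK. Qed.
Lemma J_m_tr : J_m^T = J_m. Proof. by rewrite /J_m trmx_mul trmxK. Qed.
Lemma compl_P_A_tr : (1%:M - P_A)^T = 1%:M - P_A.
Proof. by rewrite linearB /= tr_scalar_mx P_A_tr. Qed.
Lemma C_mx_tr : C_mx^T = C_mx.
Proof. by rewrite /C_mx linearD linearZ /= P_A_tr J_m_tr. Qed.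
Lemma Q_mx_tr : Q_mx^T = Q_mx.
Proof. by rewrite /Q_mx linearD linearZ /= C_mx_tr compl_P_A_tr. Qed.

Lemma J_mE i j : J_m i j = 1.
Proof. by rewrite /J_m mxE big_ord1 !mxE mulr1. Qed.

Variable r : nat.

Lemma denU_eq (U : 'M[R]_(m, r)) (V : 'M[R]_(n, r)) :
  denU A X lam sigma U V = Q_mx *m U *m (V^T *m V).
Proof.
rewrite /denU /Q_mx /C_mx /P_A /J_m -!mulmxA !mulmxDl -!scalemxAl mulmxBl.
rewrite mul1mx -!mulmxA.
set W := U *m _; set PW := A^T *m _; set JW := ones m *m _; clearbody W PW JW.
by apply/matrixP => i j; rewrite !mxE; ring.
Qed.

Lemma denV_eq (U : 'M[R]_(m, r)) (V : 'M[R]_(n, r)) :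
  denV A X lam sigma U V = 1%:M *m V *m (U^T *m Q_mx *m U).
Proof.
rewrite /denV /Q_mx /C_mx /P_A /J_m mul1mx !mulmxDr !mulmxDl -!scalemxAr.
rewrite -!scalemxAl mulmxBr mulmxBl mulmx1 !mulmxDr -!scalemxAr mulmxBr !mulmxA.
set VPU := V *m U^T *m A^T *m A *m U; set VJU := V *m _ *m _ *m _ *m U.
set VU := V *m U^T *m U; clearbody VPU VJU VU.
by apply/matrixP => i j; rewrite !mxE; ring.
Qed.

Lemma numU_eq (U : 'M[R]_(m, r)) (V : 'M[R]_(n, r)) :
  numU A X lam sigma U V = C_mx *m X *m V.
Proof. by rewrite /numU /C_mx !mulmxDl -!scalemxAl. Qed.

Lemma numV_eq (U : 'M[R]_(m, r)) (V : 'M[R]_(n, r)) :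
  numV A X lam sigma U V = X^T *m C_mx *m U.
Proof. by rewrite /numV /C_mx mulmxDr -scalemxAr mulmxDl -scalemxAl !mulmxA. Qed.

Section OrthonormalRows.
Hypothesis AAt : A *m A^T = 1%:M.

Lemma compl_P_A_gram : (1%:M - P_A)^T *m (1%:M - P_A) = 1%:M - P_A.
Proof.
rewrite compl_P_A_tr mulmxBl mul1mx mulmxBr mulmx1.
by rewrite /P_A mulmxA -(mulmxA A^T) AAt mulmx1 subrr subr0.
Qed.

Lemma objectiveW_addr (W D : 'M[R]_(m, n)) :
  objectiveW (W + D) = objectiveW W + 2 * frobdot D (Q_mx *m W - C_mx *m X)
                 + frobdot D (Q_mx *m D).
Proof.
rewrite /objectiveW !frob2_mull -/P_A compl_P_A_gram trmxK -/J_m.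
have -> : X - (W + D) = (X - W) + - D by rewrite opprD addrA.
rewrite !frobdot_quadD ?P_A_tr ?J_m_tr ?compl_P_A_tr //.
rewrite /Q_mx /C_mx !mulmxDl -!scalemxAl !mulmxDl !mulNmx !mulmxN !mul1mx.
rewrite !(frobdotNl, frobdotDr, frobdotNr, frobdotZr); ring.
Qed.

Lemma objective_addU (U E : 'M[R]_(m, r)) (V : 'M[R]_(n, r)) :
  objective A X lam sigma (U + E) V = objective A X lam sigma U V
   + 2 * frobdot E (Q_mx *m U *m (V^T *m V) - numU A X lam sigma U V)
   + frobdot E (Q_mx *m E *m (V^T *m V)).
Proof.
rewrite /objective -/(objectiveW _) -/(objectiveW _) mulmxDl objectiveW_addr !frobdot_mulr trmxK.
by rewrite numU_eq mulmxBl !mulmxA.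
Qed.

Lemma objective_addV (U : 'M[R]_(m, r)) (V E : 'M[R]_(n, r)) :
  objective A X lam sigma U (V + E) = objective A X lam sigma U V
   + 2 * frobdot E (1%:M *m V *m (U^T *m Q_mx *m U) - numV A X lam sigma U V)
   + frobdot E (1%:M *m E *m (U^T *m Q_mx *m U)).
Proof.
rewrite /objective -/(objectiveW _) -/(objectiveW _) linearD mulmxDr objectiveW_addr !frobdot_mul_tr.
rewrite numV_eq !mul1mx linearB /= !trmx_mul !trmxK Q_mx_tr C_mx_tr.
by rewrite mulmxBl !mulmxA.
Qed.

End OrthonormalRows.

Lemma C_mxE i j : C_mx i j = P_A i j + sigma.
Proof.
by rewrite /C_mx; move: P_A J_m J_mE => P J JE; rewrite !mxE JE mulr1.
Qed.

Lemma Q_mxE i j : Q_mx i j = C_mx i j + lam * ((i == j)%:R - P_A i j).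
Proof. by rewrite /Q_mx; move: C_mx P_A => C P; rewrite !mxE. Qed.

Hypotheses (lam_ge0 : 0 <= lam) (lam_le1 : lam <= 1).
Hypothesis sigma_ge : forall a b, negpart (P_A a b) <= sigma.

Lemma C_mx_ge0 : nonneg_mx C_mx.
Proof.
move=> i j; rewrite C_mxE.
by have := le_trans (oppr_le_negpart _) (sigma_ge i j); lra.
Qed.

Lemma Q_mx_ge0 : nonneg_mx Q_mx.
Proof.
move=> i j; rewrite Q_mxE.
have P_sigma_ge0 : 0 <= P_A i j + sigma by rewrite -C_mxE C_mx_ge0.
have sigma_ge0 := le_trans (negpart_ge0 _) (sigma_ge i j).
have : 0 <= (1 - lam) * (P_A i j + sigma) by rewrite mulr_ge0 // subr_ge0.
have : 0 <= lam * (sigma + (i == j)%:R) by rewrite mulr_ge0 // addr_ge0.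
by rewrite C_mxE; lra.
Qed.

End Objective.

Theorem mainTheorem9 (R : realFieldType) (k m n r : nat)
  (X : 'M[R]_(m, n)) (A : 'M[R]_(k, m)) (lam sigma : R)
  (U : 'M[R]_(m, r)) (V : 'M[R]_(n, r)) :
  nonneg_mx X ->
  A *m A^T = 1%:M ->
  0 <= lam -> lam <= 1 ->
  (forall a b, negpart ((A^T *m A) a b) <= sigma) ->
  nonneg_mx U -> nonneg_mx V ->
  (pos_mx (denU A X lam sigma U V) ->
     objective A X lam sigma (updU A X lam sigma U V) V
       <= objective A X lam sigma U V
     /\ nonneg_mx (updU A X lam sigma U V)) /\
  (pos_mx (denV A X lam sigma U V) ->
     objective A X lam sigma U (updV A X lam sigma U V)
       <= objective A X lam sigma U V
     /\ nonneg_mx (updV A X lam sigma U V)).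
Proof.
move=> X_ge0 AAt lam_ge0 lam_le1 sigma_ge U_ge0 V_ge0.
have C_ge0 := C_mx_ge0 sigma_ge.
have Q_ge0 := Q_mx_ge0 lam_ge0 lam_le1 sigma_ge.
have VtV_sym : (V^T *m V)^T = V^T *m V by rewrite trmx_mul trmxK.
have UtQU_sym : (U^T *m Q_mx A lam sigma *m U)^T = U^T *m Q_mx A lam sigma *m U.
  by rewrite !trmx_mul trmxK Q_mx_tr mulmxA.
have VtV_ge0 : nonneg_mx (V^T *m V) by apply: nonneg_mx_mul (nonneg_mx_tr _) _.
have UtQU_ge0 : nonneg_mx (U^T *m Q_mx A lam sigma *m U).
  by apply: nonneg_mx_mul (nonneg_mx_mul (nonneg_mx_tr _) _) _.
split=> den_gt0; split.
- apply: (mult_update_le (Q_mx_tr A lam sigma) VtV_sym Q_ge0 VtV_ge0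
           (f := fun U' => objective A X lam sigma U' V) (denU_eq A X lam sigma U V)
           (fun E => objective_addU X lam sigma AAt U E V) U_ge0 den_gt0).
- apply: nonneg_mx_hadamard_ediv den_gt0 => //; rewrite numU_eq.
  exact: nonneg_mx_mul (nonneg_mx_mul _ _) _.
- apply: (mult_update_le (tr_scalar_mx _ 1) UtQU_sym (@nonneg_mx1 R n) UtQU_ge0
           (f := fun V' => objective A X lam sigma U V') (denV_eq A X lam sigma U V)
           (fun E => objective_addV X lam sigma AAt U V E) V_ge0 den_gt0).
- apply: nonneg_mx_hadamard_ediv den_gt0 => //; rewrite numV_eq.
  exact: nonneg_mx_mul (nonneg_mx_mul (nonneg_mx_tr _) _) _.
Qed.
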